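(* For $\kappa=2,3,\dots$ and all $\mathrm b\in\mathbb R$, on the line $\mathbf C_{a^\kappa}=\{(\zeta_\kappa,\mathrm b):\mathrm b\in\mathbb R\}$ one has $\rho(\zeta_\kappa,\mathrm b)=\kappa\,\theta(\zeta_\kappa,\mathrm b)$ and $$\theta(\zeta_\kappa,\mathrm b)=\begin{cases}0,&\mathrm b>2,\\[2pt] \dfrac{\arccos(\mathrm b/2)}{\kappa\arccos(\mathrm b/2)+\pi},&|\mathrm b|\le2,\\[6pt] \dfrac1{\kappa+1},&\mathrm b<-2.\end{cases}$$ Symmetrically, for $\ell\ge2$, on the line $\mathbf C_{b^\ell}=\{(\mathrm a,\zeta_\ell):\mathrm a\in\mathbb R\}$ one has $\theta(\mathrm a,\zeta_\ell)=\theta(\zeta_\ell,\mathrm a)$ (given by the same formula with $\mathrm b$ replaced by $\mathrm a$ and $\kappa$ by $\ell$) and $\rho(\mathrm a,\zeta_\ell)=1-\rho(\zeta_\ell,\mathrm a)$.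
   Context: For real parameters $\mathrm a,\mathrm b$, the map $F:\mathbb R^2\to\mathbb R^2$ is $F(x,y)=(\mathrm a x-y,x)$ if $x>0$ or ($x=0$ and $y\le0$), and $F(x,y)=(\mathrm b x-y,x)$ otherwise. $\zeta_j=2\cos(\pi/j)$. To an $F$-orbit $(z_t)$ associate the word $W=w_0w_1\cdots$ with $w_t=a$ if $z_t$ lies in the open right half-plane or on the negative $y$-axis, and $w_t=b$ otherwise. $W_n$ is the length-$n$ prefix, and $|W_n|_u$ counts occurrences of the factor $u$. The rotation number is $\theta(\mathrm a,\mathrm b)=\lim_n\frac1n|W_n|_{ab}$ (independent of the orbit). The density is $\rho(\mathrm a,\mathrm b)=\lim_n\frac1{2n}(|W_n^+|_a+|W_n^-|_a)$, with $W^\pm$ the word of the orbit of $(0,\pm1)$. *)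

From Stdlib Require Import Reals Lra Bool.
Open Scope R_scope.

Definition in_a (p : R * R) : bool :=
  let (x, y) := p in
  if Rlt_dec 0 x then true
  else if Req_EM_T x 0 then (if Rle_dec y 0 then true else false)
  else false.

Definition Fmap (a b : R) (p : R * R) : R * R :=
  let (x, y) := p in
  if in_a p then (a * x - y, x) else (b * x - y, x).

Fixpoint orb (a b : R) (z0 : R * R) (t : nat) : R * R :=
  match t with
  | O => z0
  | S t' => Fmap a b (orb a b z0 t')
  end.

Definition letter_a (a b : R) (z0 : R * R) (t : nat) : bool :=
  in_a (orb a b z0 t).

(* |W_n|_{ab}: number of t with t+1 < n, w_t = a and w_{t+1} = b *)
Fixpoint count_ab (a b : R) (z0 : R * R) (n : nat) : nat :=
  match n with
  | O => O
  | S m => (count_ab a b z0 m +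
            match m with
            | O => O
            | S k => if andb (letter_a a b z0 k) (negb (letter_a a b z0 m))
                     then 1 else 0
            end)%nat
  end.

Fixpoint count_a (a b : R) (z0 : R * R) (n : nat) : nat :=
  match n with
  | O => O
  | S m => (count_a a b z0 m + if letter_a a b z0 m then 1 else 0)%nat
  end.

Definition theta_seq (a b : R) (z0 : R * R) (n : nat) : R :=
  INR (count_ab a b z0 n) / INR n.

Definition rho_seq (a b : R) (n : nat) : R :=
  (INR (count_a a b (0, 1) n) + INR (count_a a b (0, -1) n)) / (2 * INR n).

Definition zeta (j : nat) : R := 2 * cos (PI / INR j).

Definition theta_val (k : nat) (b : R) : R :=
  if Rlt_dec 2 b then 0
  else if Rlt_dec b (-2) then 1 / (INR k + 1)
  else acos (b / 2) / (INR k * acos (b / 2) + PI).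

From Stdlib Require Import Reals Lra Lia Bool Arith Classical.
Open Scope R_scope.

(* Let a = zeta_k = 2 cos (pi/k).  The a-branch (x, y) |-> (a x - y, x) is
   conjugate to the rotation by pi/k, so its k-th power is -id.  Hence an
   orbit entering region a reads exactly k letters a and then sits at the
   opposite of its entry point, which lies in region b.  Read at its
   letters b, the orbit therefore follows a reduced map of region b: apply
   the b-branch, and reflect through the origin whenever the image falls in
   region a ("flip").  If flips occur with frequency r per letter b, every
   flip accounts for one factor ab and k letters a, so
   theta = r / (1 + k r) and the density of a is k r / (1 + k r).

   Three invariants give r = 0 for b >= 2, r = 1 for b <= -2, and
   r = acos (b/2) / pi for |b| < 2, where the reduced map is a rotation by
   acos (b/2) modulo pi.  The line b = zeta_l follows from the symmetry
   F_{a,b}(-z) = - F_{b,a}(z), which complements words. *)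

Lemma Rabs_le_iff (x K : R) : Rabs x <= K <-> -K <= x <= K.
Proof.
  split; [|apply Rabs_le].
  unfold Rabs; destruct (Rcase_abs x); lra.
Qed.

Lemma Un_cv_eventually_ext (u v : nat -> R) (N : nat) (l : R) :
  (forall n, (N <= n)%nat -> u n = v n) -> Un_cv u l -> Un_cv v l.
Proof.
  intros E H eps Heps. destruct (H eps Heps) as [M HM].
  exists (max N M). intros n Hn. rewrite <- E by lia. apply HM; lia.
Qed.

Lemma cv_slope (f : nat -> R) (L K : R) (N : nat) :
  (forall n, (N <= n)%nat -> Rabs (f n - L * INR n) <= K) ->
  Un_cv (fun n => f n / INR n) L.
Proof.
  intros HK eps Heps.
  assert (HK0 : 0 <= K) by (eapply Rle_trans; [apply Rabs_pos | apply (HK N); lia]).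
  destruct (INR_unbounded (K / eps)) as [M HM].
  exists (max (max N M) 1). intros n Hn. unfold R_dist.
  assert (Hn0 : 0 < INR n) by (apply lt_0_INR; lia).
  assert (HMn : INR M <= INR n) by (apply le_INR; lia).
  assert (HKn : K < eps * INR n).
  { apply (Rmult_lt_reg_r (/ eps)); [apply Rinv_0_lt_compat; lra|].
    replace (eps * INR n * / eps) with (INR n) by (field; lra). unfold Rdiv in HM. lra. }
  replace (f n / INR n - L) with ((f n - L * INR n) / INR n) by (field; lra).
  unfold Rdiv. rewrite Rabs_mult, Rabs_inv, (Rabs_right (INR n)) by lra.
  apply (Rmult_lt_reg_r (INR n)); [lra|].
  rewrite Rmult_assoc, Rinv_l by lra. specialize (HK n ltac:(lia)). lra.
Qed.

Lemma Un_cv_bounded_gap (f g : nat -> R) (l K : R) :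
  Un_cv (fun n => f n / INR n) l -> (forall n, Rabs (g n - f n) <= K) ->
  Un_cv (fun n => g n / INR n) l.
Proof.
  intros Hf Hgap.
  assert (H0 : Un_cv (fun n => (g n - f n) / INR n) 0)
    by (apply (cv_slope _ _ K 0); intros n _; rewrite Rmult_0_l, Rminus_0_r; apply Hgap).
  pose proof (CV_plus _ _ _ _ Hf H0) as H. rewrite Rplus_0_r in H.
  apply (Un_cv_ext (fun n => f n / INR n + (g n - f n) / INR n)); [|exact H].
  intros n. unfold Rdiv. ring.
Qed.

Lemma Un_cv_const (c : R) : Un_cv (fun _ => c) c.
Proof.
  intros eps Heps. exists 0%nat. intros. unfold R_dist.
  rewrite Rminus_diag, Rabs_R0. exact Heps.
Qed.

Lemma increment_bound (u : nat -> R) (L : R) :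
  (forall n, Rabs (u (S n) - u n) <= L) ->
  forall i j, (i <= j)%nat -> Rabs (u j - u i) <= L * INR (j - i).
Proof.
  intros Hu i j Hij. induction Hij.
  - rewrite Nat.sub_diag, Rminus_diag, Rabs_R0. simpl. lra.
  - replace (S m - i)%nat with (S (m - i)) by lia. rewrite S_INR.
    replace (u (S m) - u i) with ((u (S m) - u m) + (u m - u i)) by ring.
    eapply Rle_trans; [apply Rabs_triang|]. specialize (Hu m). lra.
Qed.

Lemma in_a_true (x y : R) : in_a (x, y) = true <-> 0 < x \/ (x = 0 /\ y <= 0).
Proof.
  unfold in_a.
  destruct (Rlt_dec 0 x); [split; auto|].
  destruct (Req_EM_T x 0), (Rle_dec y 0); split; intros H; try discriminate; auto;
    destruct H as [H|[H1 H2]]; lra.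
Qed.

Lemma in_a_false (x y : R) : in_a (x, y) = false <-> x < 0 \/ (x = 0 /\ 0 < y).
Proof.
  rewrite <- not_true_iff_false, in_a_true. split; intros H.
  - destruct (Rtotal_order x 0) as [Hx|[Hx|Hx]]; [auto| |tauto].
    right; split; [exact Hx|]. destruct (Rle_dec y 0); [tauto|lra].
  - intros H'. lra.
Qed.

Lemma Fmap_a (a b x y : R) : in_a (x, y) = true -> Fmap a b (x, y) = (a * x - y, x).
Proof. intros H. unfold Fmap. rewrite H. reflexivity. Qed.

Lemma Fmap_b (a b x y : R) : in_a (x, y) = false -> Fmap a b (x, y) = (b * x - y, x).
Proof. intros H. unfold Fmap. rewrite H. reflexivity. Qed.

(* Orbits of nonzero points avoid the origin, since both branches of F are
   invertible linear maps. *)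
Lemma orb_nonzero (a b : R) (z0 : R * R) (t : nat) : z0 <> (0, 0) -> orb a b z0 t <> (0, 0).
Proof.
  intros Hz. induction t as [|t IH]; simpl; [exact Hz|].
  destruct (orb a b z0 t) as [x y]. unfold Fmap.
  destruct (in_a (x, y)); intros E; injection E as Hu Hx; subst x; apply IH; f_equal; lra.
Qed.

Definition opp_pt (p : R * R) : R * R := (- fst p, - snd p).

Lemma opp_pt_nonzero (z : R * R) : z <> (0, 0) -> opp_pt z <> (0, 0).
Proof.
  destruct z as [x y]. unfold opp_pt; simpl. intros H E.
  injection E; intros. apply H. f_equal; lra.
Qed.

Lemma opp_pt_involutive (z : R * R) : opp_pt (opp_pt z) = z.
Proof. destruct z. unfold opp_pt; simpl. f_equal; ring. Qed.

Lemma in_a_opp (z : R * R) : z <> (0, 0) -> in_a (opp_pt z) = negb (in_a z).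
Proof.
  destruct z as [x y]. unfold opp_pt; cbn [fst snd]. intros Hz.
  destruct (in_a (x, y)) eqn:E; cbn [negb].
  - apply in_a_true in E. apply in_a_false.
    destruct E as [E|[E1 E2]]; [lra|]. subst x.
    destruct (Req_dec y 0) as [->|]; [contradiction|lra].
  - apply in_a_false in E. apply in_a_true. lra.
Qed.

Lemma Fmap_opp (a b : R) (z : R * R) :
  z <> (0, 0) -> Fmap a b (opp_pt z) = opp_pt (Fmap b a z).
Proof.
  intros Hz. pose proof (in_a_opp z Hz) as E.
  destruct z as [x y]. unfold Fmap. rewrite E. unfold opp_pt; cbn [fst snd].
  destruct (in_a (x, y)); cbn [negb fst snd]; f_equal; ring.
Qed.

Lemma orb_opp (a b : R) (z0 : R * R) (t : nat) :
  z0 <> (0, 0) -> orb a b (opp_pt z0) t = opp_pt (orb b a z0 t).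
Proof.
  intros Hz. induction t as [|t IH]; simpl; [reflexivity|].
  rewrite IH. apply Fmap_opp, orb_nonzero, Hz.
Qed.

Lemma letter_opp (a b : R) (z0 : R * R) (t : nat) :
  z0 <> (0, 0) -> letter_a a b (opp_pt z0) t = negb (letter_a b a z0 t).
Proof.
  intros Hz. unfold letter_a. rewrite orb_opp by exact Hz.
  apply in_a_opp, orb_nonzero, Hz.
Qed.

(* Counting factors in an infinite binary word [w : nat -> bool]
   ([true] stands for the letter a).  [cab w n], [cba w n] and [ca w n]
   count the factors ab, ba and the letters a in the prefix of length n. *)

Fixpoint cab (w : nat -> bool) (n : nat) : nat :=
  match n with
  | O => O
  | S m => (cab w m + match m with
                      | O => O
                      | S k => if andb (w k) (negb (w m)) then 1 else 0
                      end)%nat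
  end.

Fixpoint cba (w : nat -> bool) (n : nat) : nat :=
  match n with
  | O => O
  | S m => (cba w m + match m with
                      | O => O
                      | S k => if andb (negb (w k)) (w m) then 1 else 0
                      end)%nat
  end.

Fixpoint ca (w : nat -> bool) (n : nat) : nat :=
  match n with
  | O => O
  | S m => (ca w m + if w m then 1 else 0)%nat
  end.

Lemma count_ab_cab (a b : R) (z0 : R * R) (n : nat) :
  count_ab a b z0 n = cab (letter_a a b z0) n.
Proof. induction n; simpl; auto. Qed.

Lemma count_a_ca (a b : R) (z0 : R * R) (n : nat) :
  count_a a b z0 n = ca (letter_a a b z0) n.
Proof. induction n; simpl; auto. Qed.

Lemma cab_ext (w v : nat -> bool) (n : nat) : (forall t, w t = v t) -> cab w n = cab v n.
Proof.
  intros H. induction n as [|n IH]; [reflexivity|]. cbn [cab]. rewrite IH.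
  destruct n; [reflexivity|]. rewrite !H. reflexivity.
Qed.

Lemma ca_ext (w v : nat -> bool) (n : nat) : (forall t, w t = v t) -> ca w n = ca v n.
Proof. intros H. induction n as [|n IH]; simpl; auto. rewrite IH, H. reflexivity. Qed.

Lemma cab_SS (w : nat -> bool) (n : nat) :
  cab w (S (S n)) = (cab w (S n) + if andb (w n) (negb (w (S n))) then 1 else 0)%nat.
Proof. reflexivity. Qed.

Lemma ca_S (w : nat -> bool) (n : nat) : ca w (S n) = (ca w n + if w n then 1 else 0)%nat.
Proof. reflexivity. Qed.

Lemma cab_increment (w : nat -> bool) (n : nat) :
  Rabs (INR (cab w (S n)) - INR (cab w n)) <= 1.
Proof.
  destruct n as [|n].
  - simpl. rewrite Rminus_diag, Rabs_R0. lra.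
  - rewrite cab_SS, plus_INR. destruct (w n && negb (w (S n))); simpl;
      apply Rabs_le_iff; lra.
Qed.

Lemma ca_increment (w : nat -> bool) (n : nat) :
  Rabs (INR (ca w (S n)) - INR (ca w n)) <= 1.
Proof.
  simpl. rewrite plus_INR. destruct (w n); simpl; apply Rabs_le_iff; lra.
Qed.

Lemma ca_negb (w : nat -> bool) (n : nat) : (ca (fun t => negb (w t)) n + ca w n = n)%nat.
Proof. induction n as [|n IH]; simpl; auto. destruct (w n); simpl; lia. Qed.

Lemma cab_negb (w : nat -> bool) (n : nat) : cab (fun t => negb (w t)) n = cba w n.
Proof.
  induction n as [|n IH]; [reflexivity|]. cbn [cab cba]. rewrite IH.
  destruct n; [reflexivity|]. destruct (w n), (w (S n)); reflexivity.
Qed.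

(* Factors ab and ba alternate, so their numbers differ by at most one. *)
Lemma cab_cba_diff (w : nat -> bool) (n : nat) : (1 <= n)%nat ->
  (Z.of_nat (cab w n) - Z.of_nat (cba w n)
   = (if w 0%nat then 1 else 0) - (if w (pred n) then 1 else 0))%Z.
Proof.
  intros H. induction H as [|m Hm IH]; simpl.
  - destruct (w 0%nat); reflexivity.
  - destruct m as [|m]; [lia|]. simpl in IH |- *.
    destruct (w m), (w (S m)), (w 0%nat); simpl in *; lia.
Qed.

Lemma cab_cba_close (w : nat -> bool) (n : nat) :
  Rabs (INR (cab w n) - INR (cba w n)) <= 1.
Proof.
  destruct n as [|n]; [simpl; rewrite Rminus_0_r, Rabs_R0; lra|].
  rewrite !INR_IZR_INZ, <- minus_IZR, cab_cba_diff by lia.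
  apply Rabs_le_iff. destruct (w 0%nat), (w (pred (S n))); simpl; lra.
Qed.

Definition a_block (w : nat -> bool) (k t : nat) : Prop :=
  (forall j, (1 <= j <= k)%nat -> w (t + j)%nat = true) /\ w (t + k + 1)%nat = false.

Lemma counts_after_bb (w : nat -> bool) (t : nat) : w t = false -> w (S t) = false ->
  cab w (S (S t)) = cab w (S t) /\ ca w (S (S t)) = ca w (S t).
Proof.
  intros H0 H1. rewrite cab_SS, ca_S, H0, H1. cbn [andb]. lia.
Qed.

Lemma counts_after_block (w : nat -> bool) (k t : nat) :
  (1 <= k)%nat -> w t = false -> a_block w k t ->
  cab w (S (t + k + 1)) = S (cab w (S t)) /\ ca w (S (t + k + 1)) = (ca w (S t) + k)%nat.
Proof.
  intros Hk H0 [Ha Hb].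
  assert (Hin : forall j, (j <= k)%nat ->
            cab w (S (t + j)) = cab w (S t) /\ ca w (S (t + j)) = (ca w (S t) + j)%nat).
  { induction j as [|j IH]; intros Hj.
    - rewrite Nat.add_0_r. lia.
    - assert (E : w (S (t + j)) = true) by (rewrite <- Nat.add_succ_r; apply Ha; lia).
      rewrite Nat.add_succ_r, cab_SS, ca_S, E, andb_false_r.
      destruct (IH ltac:(lia)). lia. }
  destruct (Hin k (le_n k)) as [I1 I2].
  assert (E : w (t + k)%nat = true) by (apply Ha; lia).
  replace (t + k + 1)%nat with (S (t + k)) in * by lia.
  rewrite cab_SS, ca_S, Hb, E. cbn [andb negb]. lia.
Qed.

Lemma last_b_before (w : nat -> bool) (t0 n : nat) : w t0 = false -> (t0 <= n)%nat ->
  exists g, (t0 <= g <= n)%nat /\ w g = false /\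
            forall j, (g < j <= n)%nat -> w j = true.
Proof.
  intros Hw0 Hn. induction Hn as [|n Hn IH].
  - exists t0. repeat split; auto; intros; lia.
  - destruct (w (S n)) eqn:E.
    + destruct IH as [g [Hg [Hwg Hall]]]. exists g.
      repeat split; auto; try lia. intros j Hj.
      destruct (Nat.eq_dec j (S n)) as [->|]; [exact E|apply Hall; lia].
    + exists (S n). repeat split; auto; intros; lia.
Qed.

Section BlockWords.

(* From position [t0] on (where [w] has the letter b), every letter b is
   followed either by b or by an a-block of length exactly [k]; that is,
   the tail of [w] is a concatenation of words b and b a^k. *)
Variables (w : nat -> bool) (k t0 : nat).
Hypothesis w_t0 : w t0 = false.
Hypothesis after_b : forall t, w t = false -> w (S t) = false \/ a_block w k t.

Lemma b_within_k (n : nat) : (t0 <= n)%nat ->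
  exists g, (t0 <= g <= n)%nat /\ (n <= g + k)%nat /\ w g = false.
Proof.
  intros Hn. destruct (last_b_before w t0 n w_t0 Hn) as [g [Hg [Hwg Hall]]].
  exists g. repeat split; try lia; auto.
  destruct (le_lt_dec n (g + k)) as [Hle|Hgt]; [exact Hle|exfalso].
  destruct (after_b g Hwg) as [Hs|[_ Hb]].
  - assert (w (S g) = true) by (apply Hall; lia). congruence.
  - assert (w (g + k + 1)%nat = true) by (apply Hall; lia). congruence.
Qed.

Lemma b_induction (P : nat -> Prop) : P t0 ->
  (forall t, (t0 <= t)%nat -> w t = false -> P t -> w (S t) = false -> P (S t)) ->
  (forall t, (t0 <= t)%nat -> w t = false -> P t -> a_block w k t -> P (t + k + 1)%nat) ->
  forall g, (t0 <= g)%nat -> w g = false -> P g.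
Proof.
  intros H0 Hshort Hlong g. induction g as [g IH] using lt_wf_ind. intros Hg Hwg.
  destruct (Nat.eq_dec g t0) as [->|Hne]; [exact H0|].
  destruct (last_b_before w t0 (pred g) w_t0 ltac:(lia)) as [g' [Hg' [Hwg' Hall]]].
  destruct (after_b g' Hwg') as [Hs|[Ha Hb]].
  - assert (Eg : g = S g').
    { destruct (Nat.eq_dec g (S g')) as [E|E]; [exact E|].
      assert (w (S g') = true) by (apply Hall; lia). congruence. }
    subst g. apply Hshort; [lia|exact Hwg'|apply IH; [lia|lia|exact Hwg']|exact Hs].
  - assert (Eg : g = (g' + k + 1)%nat).
    { destruct (lt_eq_lt_dec g (g' + k + 1)) as [[E|E]|E]; [|exact E|].
      - assert (w (g' + (g - g'))%nat = true) by (apply Ha; lia).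
        replace (g' + (g - g'))%nat with g in * by lia. congruence.
      - assert (w (g' + k + 1)%nat = true) by (apply Hall; lia). congruence. }
    subst g. apply Hlong; [lia|exact Hwg'|apply IH; [lia|lia|exact Hwg']|split; assumption].
Qed.

(* Each factor ab of the tail closes a block of exactly [k] letters a. *)
Lemma ca_proportional (g : nat) : (1 <= k)%nat -> (t0 <= g)%nat -> w g = false ->
  (ca w (S g) + k * cab w (S t0) = ca w (S t0) + k * cab w (S g))%nat.
Proof.
  intros k_pos. revert g.
  apply (b_induction (fun g =>
    (ca w (S g) + k * cab w (S t0) = ca w (S t0) + k * cab w (S g))%nat));
    [reflexivity| |].
  - intros t _ Ht IH Ht1. destruct (counts_after_bb w t Ht Ht1) as [E1 E2].
    rewrite E1, E2. exact IH.
  - intros t _ Ht IH Hblock.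
    destruct (counts_after_block w k t k_pos Ht Hblock) as [E1 E2].
    rewrite E1, E2. lia.
Qed.

Lemma close_near_b (u : nat -> R) (L K c : R) :
  (forall m, Rabs (u (S m) - u m) <= L) ->
  (forall g, (t0 <= g)%nat -> w g = false -> Rabs (u g - c) <= K) ->
  forall n, (t0 <= n)%nat -> Rabs (u n - c) <= K + L * INR k.
Proof.
  intros Hinc Hb n Hn. destruct (b_within_k n Hn) as [g [Hg [Hgk Hwg]]].
  assert (HL : 0 <= L) by (eapply Rle_trans; [apply Rabs_pos|apply (Hinc 0%nat)]).
  assert (Hdist : L * INR (n - g) <= L * INR k)
    by (apply Rmult_le_compat_l; [exact HL|apply le_INR; lia]).
  pose proof (increment_bound u L Hinc g n ltac:(lia)) as Hug.
  replace (u n - c) with ((u n - u g) + (u g - c)) by ring.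
  eapply Rle_trans; [apply Rabs_triang|]. specialize (Hb g ltac:(lia) Hwg). lra.
Qed.

(* The excess of letters a over [k] times the factors ab is constant at the
   letters b by [ca_proportional], so it stays bounded on the tail. *)
Definition a_excess (w : nat -> bool) (k m : nat) : R :=
  INR (ca w (S m)) - INR k * INR (cab w (S m)).

Lemma a_excess_bounded (m : nat) : (1 <= k)%nat -> (t0 <= m)%nat ->
  Rabs (a_excess w k m - a_excess w k t0) <= (1 + INR k) * INR k.
Proof.
  intros Hk Hm. pose proof (pos_INR k).
  replace ((1 + INR k) * INR k) with (0 + (1 + INR k) * INR k) by ring.
  revert m Hm. apply close_near_b.
  - intros m. unfold a_excess.
    pose proof (cab_increment w (S m)) as Hi. apply Rabs_le_iff in Hi.
    pose proof (ca_increment w (S m)) as Hi'. apply Rabs_le_iff in Hi'.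
    apply Rabs_le_iff. nra.
  - intros g Hg Hwg. pose proof (ca_proportional g Hk Hg Hwg) as E.
    apply (f_equal INR) in E. rewrite !plus_INR, !mult_INR in E.
    unfold a_excess. apply Rabs_le_iff. lra.
Qed.

Theorem block_word_frequencies (r C : R) : (1 <= k)%nat -> 0 <= r ->
  (forall g, (t0 <= g)%nat -> w g = false ->
     Rabs ((1 + INR k * r) * INR (cab w (S g)) - r * INR g) <= C) ->
  Un_cv (fun n => INR (cab w n) / INR n) (r / (1 + INR k * r)) /\
  Un_cv (fun n => INR (ca w n) / INR n) (INR k * r / (1 + INR k * r)).
Proof.
  intros Hk Hr Hdisc. pose proof (pos_INR k) as Hk0.
  set (q := 1 + INR k * r). assert (Hq : 1 <= q) by (unfold q; nra).
  set (v := fun m => q * INR (cab w (S m)) - r * INR m).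
  set (e := a_excess w k).
  assert (Hv : forall m, (t0 <= m)%nat -> Rabs (v m - 0) <= C + (q + r) * INR k).
  { apply close_near_b.
    - intros m. unfold v. rewrite S_INR.
      pose proof (cab_increment w (S m)) as Hi. apply Rabs_le_iff in Hi.
      apply Rabs_le_iff. nra.
    - intros g Hg Hwg. rewrite Rminus_0_r. apply Hdisc; auto. }
  assert (He : forall m, (t0 <= m)%nat -> Rabs (e m - e t0) <= (1 + INR k) * INR k)
    by (intros m Hm; apply a_excess_bounded; assumption).
  set (K := (C + (q + r) * INR k + r) / q).
  assert (Hcab : forall m, (t0 <= m)%nat ->
            Rabs (INR (cab w (S m)) - r / q * INR (S m)) <= K).
  { intros m Hm. specialize (Hv m Hm). rewrite Rminus_0_r in Hv.
    replace (INR (cab w (S m)) - r / q * INR (S m)) with ((v m - r) / q)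
      by (unfold v; rewrite S_INR; field; lra).
    unfold K, Rdiv. rewrite Rabs_mult, Rabs_inv, (Rabs_right q) by lra.
    apply Rmult_le_compat_r; [apply Rlt_le, Rinv_0_lt_compat; lra|].
    eapply Rle_trans; [apply Rabs_triang|]. rewrite Rabs_Ropp, (Rabs_right r) by lra. lra. }
  split.
  - apply (cv_slope _ _ K (S t0)). intros [|m] Hm; [lia|]. apply Hcab. lia.
  - apply (cv_slope _ _ (Rabs (e t0) + (1 + INR k) * INR k + INR k * K) (S t0)).
    intros [|m] Hm; [lia|]. specialize (Hcab m ltac:(lia)). specialize (He m ltac:(lia)).
    replace (INR (ca w (S m)) - INR k * r / q * INR (S m))
      with ((e m - e t0) + e t0 + INR k * (INR (cab w (S m)) - r / q * INR (S m)))
      by (unfold e, a_excess; field; lra).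
    pose proof (Rabs_triang (e m - e t0 + e t0)
                  (INR k * (INR (cab w (S m)) - r / q * INR (S m)))).
    pose proof (Rabs_triang (e m - e t0) (e t0)).
    rewrite Rabs_mult, (Rabs_right (INR k)) in * by lra.
    pose proof (Rmult_le_compat_l (INR k) _ _ Hk0 Hcab). lra.
Qed.

End BlockWords.

Section ABlocks.

Variables (k : nat) (b : R).
Hypothesis k_ge2 : (2 <= k)%nat.

Lemma INR_k_ge2 : 2 <= INR k.
Proof. replace 2 with (INR 2) by (simpl; lra). apply le_INR, k_ge2. Qed.

(* [sk j = sin (j pi / k)] solves the recurrence of the a-branch of F. *)
Definition sk (u : R) : R := sin (u * (PI / INR k)).

Lemma sk_rec (u : R) : sk (u + 1) + sk (u - 1) = zeta k * sk u.
Proof.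
  unfold sk, zeta.
  rewrite Rmult_plus_distr_r, Rmult_minus_distr_r, Rmult_1_l, sin_plus, sin_minus. ring.
Qed.

Lemma sk_pos (j : nat) : (1 <= j <= k - 1)%nat -> 0 < sk (INR j).
Proof.
  intros Hj. pose proof INR_k_ge2. pose proof PI_RGT_0. unfold sk.
  assert (Hjk : INR j + 1 <= INR k) by (rewrite <- S_INR; apply le_INR; lia).
  assert (Hj1 : 1 <= INR j) by (replace 1 with (INR 1) by reflexivity; apply le_INR; lia).
  replace (INR j * (PI / INR k)) with (PI * (INR j / INR k)) by (field; lra).
  assert (Hr : 0 < INR j / INR k < 1).
  { split; [apply Rdiv_lt_0_compat; lra|].
    apply (Rmult_lt_reg_r (INR k)); [lra|]. unfold Rdiv.
    rewrite Rmult_assoc, Rinv_l by lra. lra. }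
  apply sin_gt_0; nra.
Qed.

Lemma sk_0 : sk 0 = 0.
Proof. unfold sk. rewrite Rmult_0_l. apply sin_0. Qed.

Lemma sk_1 : 0 < sk 1.
Proof. replace 1 with (INR 1) by reflexivity. apply sk_pos. lia. Qed.

Lemma sk_nonneg (j : nat) : (j <= k)%nat -> 0 <= sk (INR j).
Proof.
  intros Hj. pose proof INR_k_ge2.
  destruct (Nat.eq_dec j 0) as [->|]; [simpl; rewrite sk_0; lra|].
  destruct (Nat.eq_dec j k) as [->|]; [|apply Rlt_le, sk_pos; lia].
  unfold sk. replace (INR k * (PI / INR k)) with PI by (field; lra). rewrite sin_PI. lra.
Qed.

Lemma sk_boundary :
  sk (-1) = - sk 1 /\ sk (INR k) = 0 /\ sk (INR k + 1) = - sk 1 /\ sk (INR k - 1) = sk 1.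
Proof.
  pose proof INR_k_ge2. unfold sk. repeat split.
  - rewrite <- sin_neg. f_equal. ring.
  - replace (INR k * (PI / INR k)) with PI by (field; lra). apply sin_PI.
  - replace ((INR k + 1) * (PI / INR k)) with (1 * (PI / INR k) + PI) by (field; lra).
    apply neg_sin.
  - replace ((INR k - 1) * (PI / INR k)) with (PI - 1 * (PI / INR k)) by (field; lra).
    apply sin_PI_x.
Qed.

(* The j-th power of the linear a-branch [(x, y) |-> (zeta k x - y, x)]. *)
Definition a_power (j : nat) (z : R * R) : R * R :=
  ((fst z * sk (INR j + 1) - snd z * sk (INR j)) / sk 1,
   (fst z * sk (INR j) - snd z * sk (INR j - 1)) / sk 1).

Lemma a_power_0 (z : R * R) : a_power 0 z = z.
Proof.
  pose proof sk_1. destruct sk_boundary as [Hm1 _]. destruct z as [x y].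
  unfold a_power; cbn [fst snd INR].
  replace (0 - 1) with (-1) by ring. rewrite Rplus_0_l, sk_0, Hm1. f_equal; field; lra.
Qed.

(* Since [zeta k] is the trace of a rotation by [pi/k], the k-th power of
   the a-branch is the point reflection. *)
Lemma a_power_k (z : R * R) : a_power k z = opp_pt z.
Proof.
  pose proof sk_1. destruct sk_boundary as [_ [Hk [Hk1 Hkm1]]]. destruct z as [x y].
  unfold a_power, opp_pt; cbn [fst snd]. rewrite Hk, Hk1, Hkm1. f_equal; field; lra.
Qed.

Lemma a_power_step (j : nat) (z : R * R) :
  in_a (a_power j z) = true -> Fmap (zeta k) b (a_power j z) = a_power (S j) z.
Proof.
  intros H. pose proof sk_1.
  pose proof (sk_rec (INR j + 1)) as R1. pose proof (sk_rec (INR j)) as R2.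
  replace (INR j + 1 - 1) with (INR j) in R1 by ring.
  destruct (a_power j z) as [X Y] eqn:E. rewrite Fmap_a by exact H.
  unfold a_power in *. injection E as EX EY. rewrite <- EX, <- EY, S_INR.
  cbn [fst snd]. replace (INR j + 1 - 1) with (INR j) by ring.
  replace (sk (INR j + 1 + 1)) with (zeta k * sk (INR j + 1) - sk (INR j)) by lra.
  replace (sk (INR j - 1)) with (zeta k * sk (INR j) - sk (INR j + 1)) by lra.
  f_equal; field; lra.
Qed.

Lemma orb_a_power (z0 : R * R) (t j : nat) :
  (forall i, (i < j)%nat -> letter_a (zeta k) b z0 (t + i) = true) ->
  orb (zeta k) b z0 (t + j) = a_power j (orb (zeta k) b z0 t).
Proof.
  induction j as [|j IH]; intros Hi.
  - rewrite Nat.add_0_r, a_power_0. reflexivity.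
  - rewrite Nat.add_succ_r. cbn [orb]. rewrite IH by (intros; apply Hi; lia).
    apply a_power_step. rewrite <- IH by (intros; apply Hi; lia). apply Hi; lia.
Qed.

Lemma a_power_in_a (z : R * R) (j : nat) :
  0 <= fst z -> snd z < 0 -> (j < k)%nat -> in_a (a_power j z) = true.
Proof.
  intros Hx Hy Hj. destruct j as [|j].
  - rewrite a_power_0. destruct z as [x y]. apply in_a_true. cbn in Hx, Hy. lra.
  - unfold a_power. apply in_a_true. left. apply Rdiv_lt_0_compat; [|exact sk_1].
    pose proof (sk_nonneg (S (S j)) ltac:(lia)) as H2. rewrite S_INR in H2.
    pose proof (sk_pos (S j) ltac:(lia)) as H1. nra.
Qed.

Lemma block_after_entry (z0 : R * R) (t : nat) :
  in_a (orb (zeta k) b z0 t) = true -> snd (orb (zeta k) b z0 t) < 0 ->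
  (forall j, (j < k)%nat -> letter_a (zeta k) b z0 (t + j) = true) /\
  orb (zeta k) b z0 (t + k) = opp_pt (orb (zeta k) b z0 t).
Proof.
  intros Ha Hy.
  assert (Hx : 0 <= fst (orb (zeta k) b z0 t)).
  { destruct (orb (zeta k) b z0 t) as [x y]. apply in_a_true in Ha. cbn. lra. }
  assert (Hall : forall j, (j <= k)%nat ->
            forall i, (i < j)%nat -> letter_a (zeta k) b z0 (t + i) = true).
  { induction j as [|j IH]; intros Hj i Hi; [lia|].
    destruct (Nat.eq_dec i j) as [->|]; [|apply IH; lia].
    unfold letter_a. rewrite orb_a_power by (apply IH; lia).
    apply a_power_in_a; auto; lia. }
  split; [apply Hall; lia|].
  rewrite orb_a_power by (apply Hall; lia). apply a_power_k.
Qed.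

Lemma b_letter_soon (z0 : R * R) (t : nat) : z0 <> (0, 0) ->
  exists j, (j <= k)%nat /\ letter_a (zeta k) b z0 (t + j) = false.
Proof.
  intros Hz0. apply NNPP. intros Hn.
  assert (HA : forall j, (j <= k)%nat -> letter_a (zeta k) b z0 (t + j) = true).
  { intros j Hj. apply not_false_iff_true. intros E. apply Hn. eauto. }
  pose proof (HA k (le_n k)) as Hk. unfold letter_a in Hk.
  rewrite orb_a_power, a_power_k, in_a_opp in Hk
    by first [apply orb_nonzero, Hz0 | intros; apply HA; lia].
  pose proof (HA 0%nat ltac:(lia)) as H0. unfold letter_a in H0.
  rewrite Nat.add_0_r in H0. rewrite H0 in Hk. discriminate.
Qed.

Lemma after_b_letter (z0 : R * R) (t : nat) : letter_a (zeta k) b z0 t = false ->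
  letter_a (zeta k) b z0 (S t) = false \/
  (a_block (letter_a (zeta k) b z0) k t /\
   orb (zeta k) b z0 (t + k + 1) = opp_pt (orb (zeta k) b z0 (S t))).
Proof.
  intros Hb. destruct (letter_a (zeta k) b z0 (S t)) eqn:Ha; [right|left; reflexivity].
  unfold letter_a in Hb, Ha. cbn [orb] in Ha.
  destruct (orb (zeta k) b z0 t) as [x y] eqn:Ez.
  rewrite Fmap_b in Ha by exact Hb. apply in_a_false in Hb.
  assert (Hx : x < 0).
  { destruct Hb as [Hb|[Hx0 Hy0]]; [exact Hb|]. subst x.
    assert (in_a (b * 0 - y, 0) = false) by (apply in_a_false; left; lra). congruence. }
  assert (Hentry : orb (zeta k) b z0 (S t) = (b * x - y, x))
    by (cbn [orb]; rewrite Ez, Fmap_b by (apply in_a_false; lra); reflexivity).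
  destruct (block_after_entry z0 (S t)) as [Hblock Hopp];
    [rewrite Hentry; exact Ha|rewrite Hentry; cbn; exact Hx|].
  replace (t + k + 1)%nat with (S t + k)%nat by lia.
  rewrite Hopp, Hentry. split; [split|reflexivity].
  - intros j Hj. replace (t + j)%nat with (S t + (j - 1))%nat by lia. apply Hblock. lia.
  - replace (t + k + 1)%nat with (S t + k)%nat by lia.
    unfold letter_a. rewrite Hopp, in_a_opp, Hentry, Ha; [reflexivity|].
    rewrite Hentry. intros E. injection E. lra.
Qed.

End ABlocks.

(* By [after_b_letter], read at its
   letters b the orbit is driven by the following map of region b: a point
   [z] goes to [F z] when [F z] is again in region b (factor bb), and to
   [- F z] otherwise (factor b a^k b).  Call the second kind of move a flip.
   The reduced map has flip frequency [r] when some invariant [Q z d],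
   where [d] follows [r * #moves - #flips], keeps [d] bounded. *)
Definition rate_invariant (k : nat) (b r : R) (Q : R * R -> R -> Prop) : Prop :=
  (forall z d, in_a z = false -> Q z d ->
     in_a (Fmap (zeta k) b z) = false -> Q (Fmap (zeta k) b z) (d + r)) /\
  (forall z d, in_a z = false -> Q z d ->
     in_a (Fmap (zeta k) b z) = true -> Q (opp_pt (Fmap (zeta k) b z)) (d + r - 1)) /\
  (exists B, forall z d, Q z d -> Rabs d <= B) /\
  (forall z, z <> (0, 0) -> in_a z = false -> Q z 0).

Definition word_rates (k : nat) (b r : R) : Prop :=
  forall z0, z0 <> (0, 0) ->
  Un_cv (fun n => INR (cab (letter_a (zeta k) b z0) n) / INR n) (r / (1 + INR k * r)) /\
  Un_cv (fun n => INR (ca (letter_a (zeta k) b z0) n) / INR n) (INR k * r / (1 + INR k * r)).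

(* Each flip costs one factor ab and [k] letters a, each move of the reduced
   map one letter b; so a flip frequency [r] per letter b gives the
   frequencies [r / (1 + k r)] and [k r / (1 + k r)] per letter. *)
Theorem rates_from_invariant (k : nat) (b r : R) (Q : R * R -> R -> Prop) :
  (2 <= k)%nat -> 0 <= r -> rate_invariant k b r Q -> word_rates k b r.
Proof.
  intros Hk Hr [Hshort [Hflip [[B HB] Hinit]]] z0 Hz0.
  set (w := letter_a (zeta k) b z0).
  destruct (b_letter_soon k b Hk z0 0 Hz0) as [t0 [_ Ht0]]. simpl in Ht0; fold w in Ht0.
  assert (Hafter : forall t, w t = false -> w (S t) = false \/ a_block w k t)
    by (intros t Ht; destruct (after_b_letter k b Hk z0 t Ht) as [H|[H _]]; auto).
  set (q := 1 + INR k * r).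
  set (d := fun g => r * (INR g - INR t0) - q * (INR (cab w (S g)) - INR (cab w (S t0)))).
  assert (HQ : forall g, (t0 <= g)%nat -> w g = false -> Q (orb (zeta k) b z0 g) (d g)).
  { apply (b_induction w k t0 Ht0 Hafter).
    - replace (d t0) with 0 by (unfold d; ring). apply Hinit; [apply orb_nonzero, Hz0|exact Ht0].
    - intros t _ Ht IH Ht1. destruct (counts_after_bb w t Ht Ht1) as [E _].
      replace (d (S t)) with (d t + r) by (unfold d; rewrite E, S_INR; ring).
      apply Hshort; [exact Ht|exact IH|exact Ht1].
    - intros t _ Ht IH Hblock.
      assert (Ha1 : w (S t) = true)
        by (destruct Hblock as [Ha _]; rewrite <- Nat.add_1_r; apply Ha; lia).
      destruct (after_b_letter k b Hk z0 t Ht) as [H|[_ Hopp]]; [fold w in H; congruence|].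
      destruct (counts_after_block w k t ltac:(lia) Ht Hblock) as [E _].
      replace (d (t + k + 1)%nat) with (d t + r - 1)
        by (unfold d, q; rewrite E, S_INR, !plus_INR; simpl; ring).
      rewrite Hopp. apply Hflip; [exact Ht|exact IH|exact Ha1]. }
  apply (block_word_frequencies w k t0 Ht0 Hafter r
           (B + Rabs (q * INR (cab w (S t0)) - r * INR t0)) ltac:(lia) Hr).
  intros g Hg Hwg. specialize (HB _ _ (HQ g Hg Hwg)). fold q.
  replace (q * INR (cab w (S g)) - r * INR g)
    with (- d g + (q * INR (cab w (S t0)) - r * INR t0)) by (unfold d; ring).
  eapply Rle_trans; [apply Rabs_triang|]. rewrite Rabs_Ropp. lra.
Qed.

(* Case [b >= 2]: at most one flip ever happens.  After a flip the point lies
   in a cone of region b which the b-branch maps into itself. *)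
Definition in_cone_b (b : R) (z : R * R) : Prop :=
  (fst z < 0 /\ (b - 1) * fst z <= snd z) \/ (fst z = 0 /\ 0 < snd z).

Lemma invariant_b_ge2 (k : nat) (b : R) : 2 <= b ->
  rate_invariant k b 0 (fun z d => d = 0 \/ (d = -1 /\ in_cone_b b z)).
Proof.
  intros Hb. unfold in_cone_b. split; [|split; [|split]].
  - intros [x y] d Hz HQ HF. rewrite Fmap_b in HF |- * by exact Hz.
    rewrite Rplus_0_r. cbn [fst snd] in *.
    destruct HQ as [HQ|[Hd [[H1 H2]|[H1 H2]]]]; [left; exact HQ|right|right];
      (split; [exact Hd|left]); [split; nra|subst x; split; nra].
  - intros [x y] d Hz HQ HF. rewrite Fmap_b in HF |- * by exact Hz.
    unfold opp_pt. cbn [fst snd] in *. apply in_a_false in Hz. apply in_a_true in HF.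
    destruct HQ as [HQ|[Hd [[H1 H2]|[H1 H2]]]].
    + right. split; [lra|].
      destruct Hz as [Hz|[Hz1 Hz2]]; [|subst x; destruct HF as [HF|[HF1 HF2]]; lra].
      destruct HF as [HF|[HF1 HF2]]; [left; split; nra|right; split; lra].
    + exfalso. destruct HF as [HF|[HF1 HF2]]; nra.
    + exfalso. subst x. lra.
  - exists 1. intros z d [->|[-> _]]; apply Rabs_le; lra.
  - intros z _ _. left. reflexivity.
Qed.

(* Case [b <= -2]: the number of moves of the reduced map exceeds the number
   of flips by at most two; the invariant tracks the quadrant of the point. *)
Lemma invariant_b_le_m2 (k : nat) (b : R) : b <= -2 ->
  rate_invariant k b 1 (fun z d => 0 <= d /\ (d = 0 \/
      (d <= 1 /\ fst z < 0 /\ snd z < 0) \/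
      (d <= 2 /\ fst z < 0 /\ 0 <= snd z /\ 2 * snd z <= b * fst z))).
Proof.
  intros Hb. split; [|split; [|split]].
  - intros [x y] d Hz HQ HF. rewrite Fmap_b in HF |- * by exact Hz.
    cbn [fst snd] in *. apply in_a_false in Hz. apply in_a_false in HF.
    destruct HQ as [HD [HQ|[[H0 [H1 H2]]|[H0 [H1 [H2 H3]]]]]].
    + split; [lra|]. destruct Hz as [Hz|[Hz1 Hz2]].
      * right; left. destruct HF as [HF|[HF1 HF2]]; lra.
      * right; right. subst x. split; [lra|]. split; [lra|]. split; [lra|]. nra.
    + exfalso. destruct HF as [HF|[HF1 HF2]]; nra.
    + exfalso. destruct HF as [HF|[HF1 HF2]]; nra.
  - intros [x y] d Hz HQ HF. rewrite Fmap_b in HF |- * by exact Hz.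
    unfold opp_pt. cbn [fst snd] in *. apply in_a_false in Hz. apply in_a_true in HF.
    replace (d + 1 - 1) with d by ring.
    destruct HQ as [HD [HQ|[[H0 [H1 H2]]|[H0 [H1 [H2 H3]]]]]].
    + split; [lra|left; lra].
    + split; [lra|]. right; right. split; [lra|]. split; [nra|]. split; [lra|].
      assert (b * y >= 0) by nra. assert (b * b >= 4) by nra. nra.
    + split; [lra|]. right; right. split; [lra|]. split; [nra|]. split; [lra|].
      assert (b * y >= b * (b * x) / 2) by nra. assert (b * b >= 4) by nra. nra.
  - exists 2. intros z d [HD HQ]. apply Rabs_le.
    destruct HQ as [HQ|[[H0 _]|[H0 _]]]; lra.
  - intros z _ _. split; [lra|left; reflexivity].
Qed.

Section Elliptic.

(* Case [|b| < 2]: the b-branch is conjugate to the rotation by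
   [phi = acos (b/2)], and the reflection to the rotation by [pi]; the
   reduced map is thus a circle rotation by [phi] modulo [pi]. *)
Variable b : R.
Hypothesis b_range : -2 < b < 2.

Let phi := acos (b / 2).

Lemma phi_bounds : 0 < phi < PI.
Proof. apply acos_bound_lt. lra. Qed.

Lemma b_branch_polar (C al : R) :
  b * (C * sin al) - C * sin (al - phi) = C * sin (al + phi).
Proof.
  replace b with (2 * cos phi) at 1 by (unfold phi; rewrite cos_acos by lra; lra).
  rewrite sin_plus, sin_minus. ring.
Qed.

Lemma polar_coordinates (x y : R) : (x, y) <> (0, 0) ->
  exists C th, 0 < C /\ -PI <= th <= PI /\ x = C * sin th /\ y = C * sin (th - phi).
Proof.
  intros Hz. pose proof phi_bounds as Hp.
  assert (Hs : 0 < sin phi) by (apply sin_gt_0; lra).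
  set (q := (x * cos phi - y) / sin phi).
  assert (HC2 : 0 < x * x + q * q).
  { destruct (Req_dec x 0) as [->|Hx]; [|assert (0 < x * x) by (apply Rsqr_pos_lt; auto); nra].
    destruct (Req_dec q 0) as [Hq|Hq]; [|assert (0 < q * q) by (apply Rsqr_pos_lt; auto); nra].
    exfalso. apply Hz. f_equal. unfold q in Hq.
    apply Rmult_integral in Hq as [Hq|Hq]; [lra|].
    exfalso. apply (Rinv_neq_0_compat (sin phi)); lra. }
  set (C := sqrt (x * x + q * q)).
  assert (HC : 0 < C) by (apply sqrt_lt_R0; exact HC2).
  assert (HCC : C * C = x * x + q * q) by (apply sqrt_sqrt; lra).
  set (u := q / C).
  assert (Hu : -1 <= u <= 1).
  { unfold u. split; apply (Rmult_le_reg_r C); auto; unfold Rdiv;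
      rewrite Rmult_assoc, Rinv_l by lra; nra. }
  assert (Hsq : sqrt (1 - u²) = Rabs x / C).
  { replace (1 - u²) with ((x / C)²) by (unfold u, Rsqr; field_simplify_eq; [nra|lra]).
    rewrite sqrt_Rsqr_abs. unfold Rdiv. rewrite Rabs_mult, Rabs_inv, (Rabs_right C) by lra.
    reflexivity. }
  set (th := if Rle_dec 0 x then acos u else - acos u).
  assert (Hsin : C * sin th = x).
  { unfold th. destruct (Rle_dec 0 x).
    - rewrite sin_acos, Hsq by auto. rewrite Rabs_right by lra. field; lra.
    - rewrite sin_neg, sin_acos, Hsq by auto. rewrite Rabs_left by lra. field; lra. }
  assert (Hcos : C * cos th = q).
  { unfold th. destruct (Rle_dec 0 x); rewrite ?cos_neg, cos_acos by auto; unfold u; field; lra. }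
  exists C, th. split; [exact HC|]. split.
  - unfold th. pose proof (acos_bound u). destruct (Rle_dec 0 x); lra.
  - split; [symmetry; exact Hsin|].
    rewrite sin_minus.
    replace (C * (sin th * cos phi - cos th * sin phi))
      with ((C * sin th) * cos phi - (C * cos th) * sin phi) by ring.
    rewrite Hsin, Hcos. unfold q. field. lra.
Qed.

Lemma polar_region_b (x y : R) : (x, y) <> (0, 0) -> in_a (x, y) = false ->
  exists C th, 0 < C /\ PI <= th < 2 * PI /\ x = C * sin th /\ y = C * sin (th - phi).
Proof.
  intros Hz Hb. pose proof phi_bounds as Hp. apply in_a_false in Hb.
  destruct (polar_coordinates x y Hz) as [C [th [HC [Hth [Hx Hy]]]]].
  assert (Hnot : ~ (0 <= th < PI)).
  { intros [H1 H2]. destruct (Req_dec th 0) as [E|E].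
    - subst th. rewrite sin_0 in Hx. rewrite Rminus_0_l, sin_neg in Hy.
      assert (0 < sin phi) by (apply sin_gt_0; lra).
      assert (C * sin phi > 0) by (apply Rmult_gt_0_compat; lra). lra.
    - assert (0 < sin th) by (apply sin_gt_0; lra).
      assert (0 < C * sin th) by (apply Rmult_lt_0_compat; lra). lra. }
  destruct (Rlt_dec th 0).
  - exists C, (th + 2 * PI). split; [exact HC|]. split; [lra|].
    replace (th + 2 * PI - phi) with ((th - phi) + 2 * PI) by ring.
    rewrite !sin_plus, sin_2PI, cos_2PI. split; [rewrite Hx|rewrite Hy]; ring.
  - exists C, th. split; [exact HC|]. split; [lra|]. split; assumption.
Qed.

Lemma sin_nonpos (u : R) : PI <= u < 2 * PI -> sin u <= 0.
Proof.
  intros H. destruct (Req_dec u PI) as [->|]; [rewrite sin_PI; lra|].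
  apply Rlt_le, sin_lt_0; lra.
Qed.

Lemma invariant_elliptic (k : nat) :
  rate_invariant k b (phi / PI) (fun z d => exists th0 C al,
    PI <= th0 < 2 * PI /\ 0 < C /\ PI <= al < 2 * PI /\
    z = (C * sin al, C * sin (al - phi)) /\ al = th0 + PI * d).
Proof.
  pose proof phi_bounds as Hp. pose proof PI_RGT_0 as HPI.
  split; [|split; [|split]].
  - intros z d Hz [th0 [C [al [H0 [HC [Hal [-> Eal]]]]]]] HF.
    rewrite Fmap_b in HF |- * by exact Hz. rewrite b_branch_polar in HF |- *.
    assert (Hlt : al + phi < 2 * PI).
    { destruct (Rlt_dec (al + phi) (2 * PI)) as [H|H]; [exact H|exfalso].
      assert (Hs : sin (al + phi) = - sin (al + phi - PI)) by (rewrite <- neg_sin; f_equal; ring).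
      pose proof (sin_nonpos (al + phi - PI) ltac:(lra)).
      assert (sin al < 0) by (apply sin_lt_0; lra).
      apply in_a_false in HF. rewrite Hs in HF. replace (al + phi - phi) with al in HF by ring.
      destruct HF as [HF|[HF1 HF2]]; nra. }
    exists th0, C, (al + phi). repeat split; try lra.
    + f_equal. f_equal. f_equal. ring.
    + rewrite Eal. field. lra.
  - intros z d Hz [th0 [C [al [H0 [HC [Hal [-> Eal]]]]]]] HF.
    rewrite Fmap_b in HF |- * by exact Hz. rewrite b_branch_polar in HF |- *.
    assert (Hge : 2 * PI <= al + phi).
    { destruct (Rlt_dec (al + phi) (2 * PI)) as [H|H]; [exfalso|lra].
      assert (sin (al + phi) < 0) by (apply sin_lt_0; lra).
      apply in_a_true in HF. destruct HF as [HF|[HF1 HF2]]; nra. }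
    exists th0, C, (al + phi - PI). repeat split; try lra.
    + unfold opp_pt. cbn [fst snd]. f_equal.
      * replace (sin (al + phi)) with (- sin (al + phi - PI))
          by (rewrite <- neg_sin; f_equal; ring). ring.
      * replace (sin al) with (- sin (al + phi - PI - phi))
          by (rewrite <- neg_sin; f_equal; ring). ring.
    + rewrite Eal. field. lra.
  - exists 1. intros z d [th0 [C [al [H0 [HC [Hal [Ez Eal]]]]]]]. apply Rabs_le.
    assert (Hd : d = (al - th0) / PI) by (rewrite Eal; field; lra).
    rewrite Hd. split; apply (Rmult_le_reg_r PI); auto; unfold Rdiv;
      rewrite Rmult_assoc, Rinv_l by lra; lra.
  - intros [x y] Hz Hb. destruct (polar_region_b x y Hz Hb) as [C [th [HC [Hth [Hx Hy]]]]].
    exists th, C, th. repeat split; try lra. rewrite Hx, Hy. reflexivity.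
Qed.

Lemma word_rates_elliptic (k : nat) : (2 <= k)%nat -> word_rates k b (phi / PI).
Proof.
  intros Hk. pose proof phi_bounds. pose proof PI_RGT_0.
  eapply rates_from_invariant; [exact Hk| |apply invariant_elliptic].
  apply Rlt_le, Rdiv_lt_0_compat; lra.
Qed.

End Elliptic.

Lemma word_rates_theta_val (k : nat) (b : R) : (2 <= k)%nat ->
  exists r, 0 <= r /\ word_rates k b r /\ theta_val k b = r / (1 + INR k * r).
Proof.
  intros Hk. pose proof PI_RGT_0. pose proof (pos_INR k).
  assert (Hge2 : 2 <= b -> word_rates k b 0)
    by (intros Hb; eapply rates_from_invariant; [exact Hk|lra|apply invariant_b_ge2, Hb]).
  assert (Hle2 : b <= -2 -> word_rates k b 1)
    by (intros Hb; eapply rates_from_invariant; [exact Hk|lra|apply invariant_b_le_m2, Hb]).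
  unfold theta_val. destruct (Rlt_dec 2 b).
  { exists 0. split; [lra|]. split; [apply Hge2; lra|]. field; lra. }
  destruct (Rlt_dec b (-2)).
  { exists 1. split; [lra|]. split; [apply Hle2; lra|]. f_equal. ring. }
  destruct (Req_dec b 2) as [->|].
  { exists 0. split; [lra|]. split; [apply Hge2; lra|].
    replace (2 / 2) with 1 by field. rewrite acos_1. field; lra. }
  destruct (Req_dec b (-2)) as [->|].
  { exists 1. split; [lra|]. split; [apply Hle2; lra|].
    replace (-2 / 2) with (- (1)) by field. rewrite acos_opp, acos_1, Rminus_0_r.
    field; split; nra. }
  pose proof (acos_bound_lt (b / 2) ltac:(lra)).
  exists (acos (b / 2) / PI). split; [apply Rlt_le, Rdiv_lt_0_compat; lra|].
  split; [apply word_rates_elliptic; [lra|exact Hk]|].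
  field. split; [lra|]. nra.
Qed.

(* Exchanging the parameters: the word of [z0] for [(a, b)] is the complement
   of the word of [-z0] for [(b, a)].  Hence the ab-counts differ by at most
   one, and the two densities add up to one. *)
Lemma count_ab_swap (a b : R) (z0 : R * R) (n : nat) : z0 <> (0, 0) ->
  Rabs (INR (count_ab a b z0 n) - INR (count_ab b a (opp_pt z0) n)) <= 1.
Proof.
  intros Hz. rewrite !count_ab_cab.
  rewrite (cab_ext (letter_a a b z0) (fun t => negb (letter_a b a (opp_pt z0) t))), cab_negb.
  - rewrite Rabs_minus_sym. apply cab_cba_close.
  - intros t. rewrite <- (opp_pt_involutive z0) at 1. apply letter_opp, opp_pt_nonzero, Hz.
Qed.

Lemma rho_seq_swap (a b : R) (n : nat) : (1 <= n)%nat -> rho_seq a b n = 1 - rho_seq b a n.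
Proof.
  intros Hn. unfold rho_seq. rewrite !count_a_ca.
  assert (Hp : (0, 1) <> (0, 0)) by (intros E; injection E; lra).
  assert (Hm : (0, -1) <> (0, 0)) by (intros E; injection E; lra).
  assert (Ep : opp_pt (0, -1) = (0, 1)) by (unfold opp_pt; cbn; f_equal; ring).
  assert (Em : opp_pt (0, 1) = (0, -1)) by (unfold opp_pt; cbn; f_equal; ring).
  rewrite (ca_ext (letter_a a b (0, 1)) (fun t => negb (letter_a b a (0, -1) t)))
    by (intros t; rewrite <- Ep at 1; apply letter_opp, Hm).
  rewrite (ca_ext (letter_a a b (0, -1)) (fun t => negb (letter_a b a (0, 1) t)))
    by (intros t; rewrite <- Em at 1; apply letter_opp, Hp).
  pose proof (ca_negb (letter_a b a (0, -1)) n) as C1.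
  pose proof (ca_negb (letter_a b a (0, 1)) n) as C2.
  apply (f_equal INR) in C1, C2. rewrite plus_INR in C1, C2.
  assert (0 < INR n) by (apply lt_0_INR; lia).
  field_simplify_eq; lra.
Qed.

Lemma rates_on_line_a (k : nat) (b : R) : (2 <= k)%nat ->
  (forall z0 : R * R, z0 <> (0, 0) -> Un_cv (theta_seq (zeta k) b z0) (theta_val k b)) /\
  Un_cv (rho_seq (zeta k) b) (INR k * theta_val k b).
Proof.
  intros Hk. destruct (word_rates_theta_val k b Hk) as [r [Hr [Hrates Htheta]]].
  split.
  - intros z0 Hz. rewrite Htheta.
    apply (Un_cv_ext (fun n => INR (cab (letter_a (zeta k) b z0) n) / INR n));
      [|apply (Hrates z0 Hz)].
    intros n. unfold theta_seq. rewrite count_ab_cab. reflexivity.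
  - assert (Hp : (0, 1) <> (0, 0)) by (intros E; injection E; lra).
    assert (Hm : (0, -1) <> (0, 0)) by (intros E; injection E; lra).
    pose proof (CV_mult _ _ _ _ (CV_plus _ _ _ _ (proj2 (Hrates _ Hp)) (proj2 (Hrates _ Hm)))
                  (Un_cv_const (/ 2))) as H.
    replace (INR k * theta_val k b)
      with ((INR k * r / (1 + INR k * r) + INR k * r / (1 + INR k * r)) * / 2)
      by (rewrite Htheta; pose proof (pos_INR k); field; nra).
    refine (Un_cv_eventually_ext _ _ 1 _ _ H).
    intros n Hn. unfold rho_seq. rewrite !count_a_ca.
    assert (0 < INR n) by (apply lt_0_INR; lia). field; lra.
Qed.

Lemma rates_on_line_b (l : nat) (a : R) : (2 <= l)%nat ->
  (forall z0 : R * R, z0 <> (0, 0) -> Un_cv (theta_seq a (zeta l) z0) (theta_val l a)) /\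
  Un_cv (rho_seq a (zeta l)) (1 - INR l * theta_val l a).
Proof.
  intros Hl. destruct (rates_on_line_a l a Hl) as [Htheta Hrho]. split.
  - intros z0 Hz. apply (Un_cv_bounded_gap _ _ _ 1 (Htheta _ (opp_pt_nonzero z0 Hz))).
    intros n. apply count_ab_swap, Hz.
  - apply (Un_cv_eventually_ext _ _ 1 _ (fun n Hn => eq_sym (rho_seq_swap a (zeta l) n Hn))).
    apply CV_minus; [apply Un_cv_const|exact Hrho].
Qed.

Theorem mainTheorem3 :
  (forall (k : nat), (2 <= k)%nat -> forall b : R,
     (forall z0 : R * R, z0 <> (0, 0) ->
        Un_cv (theta_seq (zeta k) b z0) (theta_val k b)) /\
     Un_cv (rho_seq (zeta k) b) (INR k * theta_val k b)) /\
  (forall (l : nat), (2 <= l)%nat -> forall a : R,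
     (forall z0 : R * R, z0 <> (0, 0) ->
        Un_cv (theta_seq a (zeta l) z0) (theta_val l a)) /\
     Un_cv (rho_seq a (zeta l)) (1 - INR l * theta_val l a)).
Proof.
  split; intros k Hk x; [apply rates_on_line_a | apply rates_on_line_b]; exact Hk.
Qed.
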